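(* Let $m,k\ge1$, $N=m+k$, let $\Phi$ be a Minkowski norm on $\mathbb{R}^m$ and $\Psi$ a Minkowski norm on $\mathbb{R}^k$, with dual norms $\Phi^0,\Psi^0$. For $\varepsilon>0$ let $K(z,\sigma)=(\varepsilon^2+\Phi^0(z)^2)^2+16\,\Psi^0(\sigma)^2$ on $\mathbb{R}^N$. Then $$\Phi(\nabla_z K)^2+\frac{\Phi^0(z)^2}{4}\Psi(\nabla_\sigma K)^2=16\,\Phi^0(z)^2\,K.$$
   Context: Points of $\mathbb{R}^N=\mathbb{R}^m\times\mathbb{R}^k$ are written $(z,\sigma)$. A Minkowski norm on $\mathbb{R}^n$ is a function $M:\mathbb{R}^n\to[0,\infty)$ such that $M^2\in C^2(\mathbb{R}^n\setminus\{0\})$ is strictly convex and $M(\lambda x)=|\lambda|M(x)$ for all $x$, $\lambda\in\mathbb{R}$; its dual norm is $M^0(x)=\sup_{M(\xi)=1}\langle x,\xi\rangle$. *)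

From HB Require Import structures.
From mathcomp Require Import all_boot all_order all_algebra.
From mathcomp Require Import all_classical all_reals all_analysis.
Set Implicit Arguments. Unset Strict Implicit. Unset Printing Implicit Defensive.
Import Order.TTheory GRing.Theory Num.Theory.
Import numFieldNormedType.Exports.
Local Open Scope classical_set_scope.
Local Open Scope ring_scope.

Section Defs.
Variable R : realType.

Definition evec (n : nat) (i : 'I_n) : 'rV[R]_n := delta_mx ord0 i.

Definition inner (n : nat) (x y : 'rV[R]_n) : R := \sum_(i < n) x ord0 i * y ord0 i.

Definition C2_on (n : nat) (U : set 'rV[R]_n) (f : 'rV[R]_n -> R) : Prop :=
  open U /\
  (forall i x, U x -> derivable f x (evec i)) /\
  (forall i, {within U, continuous (fun x => derive f x (evec i))}) /\
  (forall i j x, U x -> derivable (fun y => derive f y (evec j)) x (evec i)) /\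
  (forall i j, {within U, continuous
       (fun x => derive (fun y => derive f y (evec j)) x (evec i))}).

Definition minkowski_norm (n : nat) (M : 'rV[R]_n -> R) : Prop :=
  (forall x, 0 <= M x) /\
  C2_on (~` [set 0]) (fun x => M x ^+ 2) /\
  (forall x y t, x != y -> 0 < t < 1 ->
     M (t *: x + (1 - t) *: y) ^+ 2 < t * M x ^+ 2 + (1 - t) * M y ^+ 2) /\
  (forall (l : R) x, M (l *: x) = `|l| * M x).

Definition dual_norm (n : nat) (M : 'rV[R]_n -> R) (x : 'rV[R]_n) : R :=
  sup [set inner x xi | xi in [set xi | M xi = 1]].

Definition grad_z (m k : nat) (K : 'rV[R]_m * 'rV[R]_k -> R) p : 'rV[R]_m :=
  \row_i derive K p (evec i, 0).
Definition grad_s (m k : nat) (K : 'rV[R]_m * 'rV[R]_k -> R) p : 'rV[R]_k :=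
  \row_i derive K p (0, evec i).
End Defs.

(* For a Minkowski norm [M] with dual norm [D], the maximum defining [D x] over the
   compact sphere [M = 1] is attained at a unique point [xs] (strict convexity of
   [M^2]); near-maximizers are close to [xs], so [D] is differentiable at [x <> 0]
   with gradient [xs].  Hence [D^2] has gradient [g = 2 D(x) xs] with [M g = 2 D(x)],
   which also holds at [x = 0] with [g = 0] because [D] is bounded by a multiple of
   the Euclidean norm.  The identity then follows from the chain rule:
   [grad_z K = 2 (eps^2 + D_Phi(z)^2) g1] and [grad_s K = 16 g2]. *)

From HB Require Import structures.
From mathcomp Require Import all_boot all_order all_algebra.
From mathcomp Require Import all_classical all_reals all_analysis.
From mathcomp Require Import ring lra.
Import Order.TTheory GRing.Theory Num.Theory.
Import numFieldNormedType.Exports.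
Local Open Scope classical_set_scope.
Local Open Scope ring_scope.
Set Implicit Arguments. Unset Strict Implicit. Unset Printing Implicit Defensive.

Section Inner.
Variables (R : realType) (n : nat).
Implicit Types (x y w g : 'rV[R]_n) (a : R).

Lemma innerC x y : inner x y = inner y x.
Proof. by apply: eq_bigr => i _; rewrite mulrC. Qed.

Lemma innerDl w x y : inner (x + y) w = inner x w + inner y w.
Proof. by rewrite /inner -big_split; apply: eq_bigr => i _; rewrite mxE mulrDl. Qed.

Lemma innerZl w a x : inner (a *: x) w = a * inner x w.
Proof. by rewrite /inner mulr_sumr; apply: eq_bigr => i _; rewrite mxE mulrA. Qed.

Lemma innerDr w x y : inner w (x + y) = inner w x + inner w y.
Proof. by rewrite !(innerC w) innerDl. Qed.

Lemma innerZr w a x : inner w (a *: x) = a * inner w x.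
Proof. by rewrite !(innerC w) innerZl. Qed.

Lemma innerNr w x : inner w (- x) = - inner w x.
Proof. by rewrite -scaleN1r innerZr mulN1r. Qed.

Lemma innerBr w x y : inner w (x - y) = inner w x - inner w y.
Proof. by rewrite innerDr innerNr. Qed.

Lemma inner0r w : inner w 0 = 0.
Proof. by rewrite -(scale0r 0) innerZr mul0r. Qed.

Lemma inner0l w : inner 0 w = 0.
Proof. by rewrite innerC inner0r. Qed.

Lemma inner_evec i g : inner (evec R i) g = g ord0 i.
Proof.
rewrite /inner (bigD1 i) //= big1 => [|j ji]; rewrite /evec mxE.
  by rewrite !eqxx mul1r addr0.
by rewrite (negbTE ji) andbF mul0r.
Qed.

Lemma inner_self_gt0 x : x != 0 -> 0 < inner x x.
Proof.
move=> x0; have [i xi] : exists i, x ord0 i != 0.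
  apply/existsP; apply: contraR x0; rewrite negb_exists => /forallP x_eq0.
  by apply/eqP/rowP => i; rewrite mxE; apply/eqP/negPn/x_eq0.
rewrite /inner (bigD1 i) //= ltr_pwDl ?sqr_ge0 -?expr2 ?exprn_even_gt0 ?xi //.
by rewrite sumr_ge0 // => j _; rewrite -expr2 sqr_ge0.
Qed.

Lemma norm_coord_le x i : `|x ord0 i| <= `|x|.
Proof.
by rewrite [leRHS]/Num.norm /= mx_normrE; apply/bigmax_geP; right; exists (ord0, i).
Qed.

Lemma norm_inner_le x y : `|inner x y| <= n%:R * `|x| * `|y|.
Proof.
rewrite /inner (le_trans (ler_norm_sum _ _ _)) //.
apply: (@le_trans _ _ (\sum_(i < n) `|x| * `|y|)).
  by apply: ler_sum => i _; rewrite normrM ler_pM ?norm_coord_le.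
by rewrite sumr_const card_ord -mulrA mulr_natl.
Qed.

End Inner.

Lemma half_in_unit_interval {R : realFieldType} : 0 < (2^-1 : R) < 1.
Proof. by rewrite invr_gt0 ltr0n invf_lt1 // ltr1n. Qed.

Lemma lipschitz_continuous (R : realType) (V W : normedModType R) (f : V -> W) C :
  (forall x y, `|f x - f y| <= C * `|x - y|) -> continuous f.
Proof.
move=> f_lip x; apply/cvgrPdist_lt => e e0.
have C1 : 0 < `|C| + 1 by rewrite ltr_wpDl.
near=> y; apply: le_lt_trans (f_lip x y) _.
apply: (@le_lt_trans _ _ ((`|C| + 1) * `|x - y|)).
  by rewrite ler_wpM2r // (le_trans (ler_norm C)) // lerDl.
rewrite mulrC -ltr_pdivlMr //; near: y.
by apply: (@cvgr_dist_lt _ _ _ (nbhs x) _ id x cvg_id); rewrite divr_gt0.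
Unshelve. all: by end_near. Qed.

Lemma is_diff_of_estimate (R : realType) (V : normedModType R) (f : V -> R)
    (L : {linear V -> R}) x :
  continuous L ->
  (forall eta, 0 < eta -> exists2 del, 0 < del & forall v, `|v| < del ->
     `|f (x + v) - f x - L v| <= eta * `|v|) ->
  is_diff x f L.
Proof.
move=> Lc f_est; have f_expand : f \o shift x = cst (f x) + L +o_ 0 id.
  apply/eqaddoP => eta eta0; have [del del0 f_del] := f_est eta eta0.
  near=> v; rewrite !fctE /= opprD addrA (addrC v); apply: f_del.
  by near: v; apply: nbhs0_lt.
have dfE := diff_unique Lc f_expand.
by apply: DiffDef => //; apply/diff_locallyP; rewrite dfE.
Unshelve. all: by end_near. Qed.

Section Gradient.
Variables (R : realType) (n : nat).
Implicit Types (x g : 'rV[R]_n).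

Lemma continuous_inner x : continuous (inner x).
Proof.
by apply: (@lipschitz_continuous _ _ _ _ (n%:R * `|x|)) => a b; rewrite -innerBr norm_inner_le.
Qed.

Definition covec g : 'rV[R]_n -> R := fun v => inner v g.

Lemma covec_is_linear g : linear (covec g).
Proof. by move=> a u w; rewrite /covec innerDl innerZl. Qed.

HB.instance Definition _ g :=
  GRing.isLinear.Build R 'rV[R]_n R *%R (covec g) (covec_is_linear g).

Lemma continuous_covec g : continuous (covec g).
Proof.
have -> : covec g = inner g by apply/funext => v; rewrite /covec innerC.
exact: continuous_inner.
Qed.

Definition has_gradient (f : 'rV[R]_n -> R) x g :=
  forall eta, 0 < eta -> exists2 del, 0 < del & forall v, `|v| < del ->
    `|f (x + v) - f x - inner v g| <= eta * `|v|.

Lemma has_gradient_is_diff f x g : has_gradient f x g -> is_diff x f (covec g).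
Proof. exact: is_diff_of_estimate (@continuous_covec g). Qed.

End Gradient.

Section MinkowskiNorm.
Variables (R : realType) (n : nat) (M : 'rV[R]_n -> R).
Hypothesis M_ge0 : forall x, 0 <= M x.
Hypothesis M2_strict_convex : forall x y t, x != y -> 0 < t < 1 ->
  M (t *: x + (1 - t) *: y) ^+ 2 < t * M x ^+ 2 + (1 - t) * M y ^+ 2.
Hypothesis M_homo : forall (l : R) x, M (l *: x) = `|l| * M x.

Lemma mink0 : M 0 = 0.
Proof. by have := M_homo 0 0; rewrite scale0r normr0 mul0r. Qed.

Lemma minkN x : M (- x) = M x.
Proof. by rewrite -scaleN1r M_homo normrN normr1 mul1r. Qed.

Lemma mink_gt0 x : x != 0 -> 0 < M x.
Proof.
move=> x0; have xNx : x != - x.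
  apply: contra x0 => /eqP xE.
  have : 2%:R *: x == 0 by rewrite scaler_nat mulr2n {2}xE subrr.
  by rewrite scaler_eq0 pnatr_eq0.
have := M2_strict_convex xNx half_in_unit_interval.
have -> : 2^-1 *: x + (1 - 2^-1) *: - x = 0.
  by rewrite (_ : 1 - 2^-1 = 2^-1 :> R) ?scalerN ?subrr //; field.
rewrite mink0 minkN -mulrDl subrKC mul1r expr0n /= => Mx2_gt0.
by rewrite lt0r M_ge0 andbT; apply: contraTneq Mx2_gt0 => ->; rewrite expr0n ltxx.
Qed.

Lemma mink2_convex x y t : 0 <= t <= 1 ->
  M (t *: x + (1 - t) *: y) ^+ 2 <= t * M x ^+ 2 + (1 - t) * M y ^+ 2.
Proof.
move=> /andP[t0 t1]; have [->|xy] := eqVneq x y.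
  by rewrite -scalerDl subrKC scale1r -mulrDl subrKC mul1r.
have [->|tn0] := eqVneq t 0; first by rewrite scale0r add0r subr0 scale1r !mul1r mul0r add0r.
have [->|tn1] := eqVneq t 1; first by rewrite scale1r subrr scale0r addr0 !mul1r mul0r addr0.
by apply/ltW/M2_strict_convex; rewrite // lt0r tn0 t0 lt_neqAle tn1 t1.
Qed.

Lemma mink_triangle x y : M (x + y) <= M x + M y.
Proof.
have [->|x0] := eqVneq x 0; first by rewrite add0r mink0 add0r.
have [->|y0] := eqVneq y 0; first by rewrite addr0 mink0 addr0.
set a := M x; set b := M y.
have a0 : 0 < a by apply: mink_gt0.
have b0 : 0 < b by apply: mink_gt0.
have ab0 : 0 < a + b by rewrite addr_gt0.
set t := a / (a + b).
have t01 : 0 <= t <= 1.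
  by rewrite /t divr_ge0 ?(ltW a0) ?(ltW ab0) //= ler_pdivrMr // mul1r lerDl ltW.
(* the convex combination of the normalised vectors [x / a] and [y / b] is [(x + y) / (a + b)] *)
have := mink2_convex (a^-1 *: x) (b^-1 *: y) t01.
have -> : t *: (a^-1 *: x) + (1 - t) *: (b^-1 *: y) = (a + b)^-1 *: (x + y).
  by rewrite !scalerA scalerDr; congr (_ *: _ + _ *: _); rewrite /t; field;
    rewrite ?gt_eqF.
rewrite !M_homo !gtr0_norm ?invr_gt0 // !mulVf ?gt_eqF // expr1n !mulr1 subrKC.
rewrite expr_le1 ?mulr_ge0 ?invr_ge0 ?(ltW ab0) //.
by rewrite mulrC ler_pdivrMr // mul1r.
Qed.

Lemma mink_le_norm : exists2 C, 0 <= C & forall x, M x <= C * `|x|.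
Proof.
exists (\sum_(j < n) M (delta_mx 0 j)) => [|x]; first by rewrite sumr_ge0.
rewrite {1}(row_sum_delta x) mulr_suml.
apply: (@le_trans _ _ (\sum_(j < n) M (x 0 j *: delta_mx 0 j))).
  elim/big_ind2: _ => [|a b c d ab cd|//]; first by rewrite mink0.
  exact: le_trans (mink_triangle _ _) (lerD ab cd).
by apply: ler_sum => j _; rewrite M_homo mulrC ler_wpM2l // norm_coord_le.
Qed.

Lemma continuous_mink : continuous M.
Proof.
have [C _ M_le] := mink_le_norm; apply: (@lipschitz_continuous _ _ _ _ C) => x y.
have M_le_add u v : M u <= M v + C * `|u - v|.
  by rewrite -{1}(subrK v u) addrC (le_trans (mink_triangle _ _)) ?lerD2l.
have := M_le_add x y; have := M_le_add y x; rewrite -normrN opprB ler_norml; lra.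
Qed.

Lemma mink_ge_norm : exists2 c, 0 < c & forall x, c * `|x| <= M x.
Proof.
pose A := [set x : 'rV[R]_n | `|x| = 1].
have normalize x : x != 0 -> A (`|x|^-1 *: x).
  by move=> x0; rewrite /A /= normrZ normfV normr_id mulVf // normr_eq0.
have [A0|A0] := pselect (A !=set0); last first.
  exists 1 => // x; have [->|x0] := eqVneq x 0; first by rewrite normr0 mulr0.
  by exfalso; apply: A0; exists (`|x|^-1 *: x); apply: normalize.
have A_compact : compact A.
  apply: bounded_closed_compact; first by exists 1; split => // r r1 x /= ->; rewrite ltW.
  exact: (proj1 (continuous_closedP _) (@norm_continuous _ 'rV[R]_n) _ (@closed_eq R 1)).
have [x0 /[!inE] Ax0 M_min] :=
  compact_EVT_min A0 A_compact (continuous_subspaceT continuous_mink).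
have x0_neq0 : x0 != 0.
  by apply: contraPneq Ax0 => ->; rewrite /A /= normr0 => /eqP; rewrite eq_sym oner_eq0.
exists (M x0); first exact: mink_gt0.
move=> x; have [->|x_neq0] := eqVneq x 0; first by rewrite normr0 mulr0.
have -> : M x = `|x| * M (`|x|^-1 *: x).
  by rewrite M_homo normfV normr_id mulrA mulfV ?mul1r ?normr_eq0.
by rewrite mulrC ler_wpM2l // M_min // inE; apply: normalize.
Qed.

Section DualNorm.
Hypothesis n_gt0 : (0 < n)%N.

Let S := [set xi : 'rV[R]_n | M xi = 1].
Let D := dual_norm M.

Lemma unit_sphere_bounded : exists2 B, 0 < B & forall xi, S xi -> `|xi| <= B.
Proof.
have [c c0 M_ge] := mink_ge_norm.
by exists c^-1 => [|xi Sxi]; rewrite ?invr_gt0 // -[c^-1]mulr1 ler_pdivlMl // -Sxi M_ge.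
Qed.

Lemma compact_unit_sphere : compact S.
Proof.
have [B _ S_le] := unit_sphere_bounded.
apply: bounded_closed_compact.
  by exists B; split => [|r Br xi /S_le]; [exact: num_real | move/le_trans; apply; apply: ltW].
exact: (proj1 (continuous_closedP _) (continuous_mink) _ (@closed_eq R 1)).
Qed.

Lemma unit_sphere_neq0 : S !=set0.
Proof.
pose e : 'rV[R]_n := evec R (Ordinal n_gt0).
have e_neq0 : e != 0.
  by apply: contraTneq isT => /rowP /(_ (Ordinal n_gt0)); rewrite !mxE !eqxx => /eqP; rewrite oner_eq0.
exists ((M e)^-1 *: e); rewrite /S /= M_homo normfV gtr0_norm ?mink_gt0 //.
by rewrite mulVf // gt_eqF // mink_gt0.
Qed.
Lemma dual_norm_attained x : exists2 xs, S xs &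
  D x = inner x xs /\ forall xi, S xi -> inner x xi <= inner x xs.
Proof.
have [xs /[!inE] Sxs xs_max] := compact_EVT_max unit_sphere_neq0 compact_unit_sphere
  (continuous_subspaceT (@continuous_inner _ _ x)).
have {}xs_max xi : S xi -> inner x xi <= inner x xs by move=> Sxi; apply: xs_max; rewrite inE.
exists xs => //; split => //; apply/eqP; rewrite eq_le; apply/andP; split.
  apply: ge_sup; first by exists (inner x xs), xs.
  by move=> _ [xi Sxi <-]; apply: xs_max.
apply: sup_upper_bound; last by exists xs.
split; first by exists (inner x xs), xs.
by exists (inner x xs) => _ [xi Sxi <-]; apply: xs_max.
Qed.

Lemma inner_le_dual_norm x xi : S xi -> inner x xi <= D x.
Proof. by have [xs _ [-> xs_max]] := dual_norm_attained x; apply: xs_max. Qed.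

Lemma inner_le_dual_normM x xi : inner x xi <= D x * M xi.
Proof.
have [->|xi0] := eqVneq xi 0; first by rewrite inner0r mink0 mulr0.
have Mxi := mink_gt0 xi0.
have := inner_le_dual_norm x (xi := (M xi)^-1 *: xi).
rewrite innerZr /S /= M_homo normfV gtr0_norm // mulVf ?gt_eqF // => /(_ erefl).
by rewrite mulrC ler_pdivrMr.
Qed.

Lemma dual_norm_ge0 x : 0 <= D x.
Proof.
have [xs Sxs [Dx _]] := dual_norm_attained x.
have := inner_le_dual_norm x (xi := - xs); rewrite innerNr /S /= minkN Dx => /(_ Sxs).
lra.
Qed.

Lemma dual_norm_gt0 x : x != 0 -> 0 < D x.
Proof.
move=> x0; have := lt_le_trans (inner_self_gt0 x0) (inner_le_dual_normM x x).
by rewrite pmulr_lgt0 // mink_gt0.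
Qed.

Lemma dual_norm_le_norm : exists2 L, 0 <= L & forall x, D x <= L * `|x|.
Proof.
have [B B0 S_le] := unit_sphere_bounded.
exists (n%:R * B) => [|x]; first by rewrite mulr_ge0 // ltW.
have [xs Sxs [-> _]] := dual_norm_attained x.
apply: le_trans (ler_norm _) _; apply: le_trans (norm_inner_le _ _) _.
by rewrite mulrAC ler_wpM2r // ler_wpM2l // S_le.
Qed.
(* the midpoint of two maximizers would be a maximizer with [M < 1] *)
Lemma dual_maximizer_unique x a b : x != 0 -> S a -> S b ->
  inner x a = D x -> inner x b = D x -> a = b.
Proof.
move=> x0 Sa Sb xa xb; apply/eqP/negPn/negP => ab.
have := M2_strict_convex ab half_in_unit_interval.
rewrite Sa Sb expr1n !mulr1 subrKC; set c := _ + _ => Mc_lt1.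
have xc : inner x c = D x by rewrite innerDr !innerZr xa xb -mulrDl subrKC mul1r.
have := inner_le_dual_normM x c; rewrite xc -{1}(mulr1 (D x)) ler_pM2l ?dual_norm_gt0 //.
by move=> /(exprn_ege1 2) /le_lt_trans /(_ Mc_lt1); rewrite ltxx.
Qed.
Lemma near_maximizer_close x xs : x != 0 -> S xs -> D x = inner x xs ->
  forall e, 0 < e -> exists2 d, 0 < d &
    forall xi, S xi -> D x - d <= inner x xi -> `|xi - xs| < e.
Proof.
move=> x0 Sxs Dx e e0.
pose T := S `&` [set xi | e <= `|xi - xs|].
have [T0|T0] := pselect (T !=set0); last first.
  exists 1 => // xi Sxi _; rewrite ltNge; apply/negP => far.
  by apply: T0; exists xi.
have T_compact : compact T.
  apply: compact_closedI compact_unit_sphere _.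
  have dist_cont : continuous (fun xi : 'rV[R]_n => `|xi - xs|).
    apply: (@lipschitz_continuous _ _ _ _ 1) => a b.
    by rewrite mul1r (le_trans (ler_dist_dist _ _)) // opprB addrA subrK.
  exact: (proj1 (continuous_closedP _) dist_cont _ (@closed_ge R e)).
have [xt] := compact_EVT_max T0 T_compact
  (continuous_subspaceT (@continuous_inner _ _ x)).
rewrite inE => -[Sxt far_xt] xt_max.
have xt_lt : inner x xt < D x.
  rewrite lt_neqAle inner_le_dual_norm // andbT; apply: contraTneq far_xt => xtE.
  by rewrite (dual_maximizer_unique x0 Sxt Sxs xtE (esym Dx)) subrr normr0 -ltNge.
exists ((D x - inner x xt) / 2) => [|xi Sxi xi_near].
  by rewrite divr_gt0 // subr_gt0.
rewrite ltNge; apply/negP => far_xi.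
have : inner x xi <= inner x xt by apply: xt_max; rewrite inE.
lra.
Qed.
(* [D x + <v, xs> <= D (x + v) <= D x + <v, xv>] with [xv] a maximizer for [x + v],
   and [xv] is close to [xs] because it nearly maximizes [inner x] *)
Lemma dual_norm_has_gradient x xs : x != 0 -> S xs -> D x = inner x xs ->
  has_gradient D x xs.
Proof.
move=> x0 Sxs Dx eta eta0.
have n_pos : 0 < n%:R :> R by rewrite ltr0n.
have [B B0 S_le] := unit_sphere_bounded.
have [d d0 close] := near_maximizer_close x0 Sxs Dx (divr_gt0 eta0 n_pos).
have K0 : 0 < n%:R * (B + B) + 1 by rewrite ltr_wpDl // mulr_ge0 // ltW // addr_gt0.
exists (d / (n%:R * (B + B) + 1)) => [|v v_small]; first by rewrite divr_gt0.
have [xv Sxv [Dxv _]] := dual_norm_attained (x + v).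
have lo : D x + inner v xs <= D (x + v) by rewrite Dx -innerDl inner_le_dual_norm.
have hi : D (x + v) <= D x + inner v xv by rewrite Dxv innerDl lerD2r inner_le_dual_norm.
have v_small' : n%:R * `|v| * (B + B) <= d.
  move: (ltW v_small); rewrite ler_pdivlMr // => /(le_trans _); apply.
  by have := normr_ge0 v; nra.
have inner_v_xs : `|inner v xv - inner v xs| <= n%:R * `|v| * (B + B).
  rewrite -innerBr (le_trans (norm_inner_le _ _)) // ler_wpM2l ?mulr_ge0 //.
  by rewrite (le_trans (ler_normB _ _)) // lerD ?S_le.
have xv_close : `|xv - xs| < eta / n%:R.
  apply: close => //; rewrite (_ : inner x xv = D (x + v) - inner v xv).
    by move: inner_v_xs; rewrite ler_norml; lra.
  by rewrite Dxv innerDl addrK.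
have : inner v (xv - xs) <= eta * `|v|.
  apply: le_trans (ler_norm _) (le_trans (norm_inner_le _ _) _).
  by have := normr_ge0 v; move: (ltW xv_close); rewrite ler_pdivlMr // => ?; nra.
rewrite innerBr ler_norml => ?; apply/andP; split; last lra.
by have := mulr_ge0 (ltW eta0) (normr_ge0 v); lra.
Qed.
Lemma is_diff_sqr_dual_norm x :
  exists2 g, M g = 2 * D x & is_diff x (fun y => D y ^+ 2) (covec g).
Proof.
have [->|x0] := eqVneq x 0.
  have [L L0 D_le] := dual_norm_le_norm.
  have D0 : D 0 = 0.
    by apply/le_anti; rewrite dual_norm_ge0 andbT (le_trans (D_le 0)) // normr0 mulr0.
  exists 0; first by rewrite mink0 D0 mulr0.
  apply: has_gradient_is_diff => eta eta0.
  have L1 : 0 < L ^+ 2 + 1 by rewrite ltr_wpDl ?sqr_ge0.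
  exists (eta / (L ^+ 2 + 1)) => [|v v_small]; first by rewrite divr_gt0.
  rewrite add0r D0 expr0n subr0 inner0r subr0 ger0_norm ?exprn_ge0 ?dual_norm_ge0 //.
  have : D v ^+ 2 <= (L * `|v|) ^+ 2 by rewrite lerXn2r ?nnegrE ?dual_norm_ge0 ?mulr_ge0.
  by move: (ltW v_small); rewrite ler_pdivlMr // => ?; have := normr_ge0 v; nra.
have [xs Sxs [Dx _]] := dual_norm_attained x.
exists ((2 * D x) *: xs).
  by rewrite M_homo Sxs mulr1 ger0_norm // mulr_ge0 // dual_norm_ge0.
have dD := has_gradient_is_diff (dual_norm_has_gradient x0 Sxs Dx).
have -> : (fun y => D y ^+ 2) = D ^+ 2 by apply/funext => y; rewrite exprfctE.
by apply: is_diff_eq; apply/funext => v; rewrite /covec /= innerZr expr1.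
Qed.

End DualNorm.

End MinkowskiNorm.

Section ProjectionDiff.
Variables (R : realType) (U V : normedModType R).

Global Instance is_diff_fst (p : U * V) : is_diff p fst fst.
Proof.
have fst_cont : continuous (fst : U * V -> U) by move=> q; apply: cvg_fst.
by apply: DiffDef; [exact: linear_differentiable | exact: diff_lin].
Qed.

Global Instance is_diff_snd (p : U * V) : is_diff p snd snd.
Proof.
have snd_cont : continuous (snd : U * V -> V) by move=> q; apply: cvg_snd.
by apply: DiffDef; [exact: linear_differentiable | exact: diff_lin].
Qed.

End ProjectionDiff.

Lemma partial_gradients_is_diff (R : realType) (m k : nat)
    (K : 'rV[R]_m * 'rV[R]_k -> R) (p : 'rV[R]_m * 'rV[R]_k) a b :
  is_diff p K (fun v => inner v.1 a + inner v.2 b) ->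
  grad_z K p = a /\ grad_s K p = b.
Proof.
move=> dK; split; apply/rowP => i; rewrite !mxE deriveE ?ex_diff // diff_val /=.
  by rewrite inner_evec inner0l addr0.
by rewrite inner_evec inner0l add0r.
Qed.

Theorem lemma2p5 (R : realType) (m k : nat) (hm : (1 <= m)%N) (hk : (1 <= k)%N)
  (Phi : 'rV[R]_m -> R) (Psi : 'rV[R]_k -> R)
  (hPhi : minkowski_norm Phi) (hPsi : minkowski_norm Psi)
  (eps : R) (heps : 0 < eps) (z : 'rV[R]_m) (sigma : 'rV[R]_k) :
  let K := fun p : 'rV[R]_m * 'rV[R]_k =>
    (eps ^+ 2 + dual_norm Phi p.1 ^+ 2) ^+ 2 + 16 * dual_norm Psi p.2 ^+ 2 in
  differentiable K (z, sigma) /\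
  Phi (grad_z K (z, sigma)) ^+ 2
    + dual_norm Phi z ^+ 2 / 4 * Psi (grad_s K (z, sigma)) ^+ 2
  = 16 * dual_norm Phi z ^+ 2 * K (z, sigma).
Proof.
move=> K.
have [Phi_ge0 [_ [Phi_conv Phi_homo]]] := hPhi.
have [Psi_ge0 [_ [Psi_conv Psi_homo]]] := hPsi.
have [g1 Phi_g1 dPhi] := is_diff_sqr_dual_norm Phi_ge0 Phi_conv Phi_homo hm z.
have [g2 Psi_g2 dPsi] := is_diff_sqr_dual_norm Psi_ge0 Psi_conv Psi_homo hk sigma.
set c := 2 * (eps ^+ 2 + dual_norm Phi z ^+ 2).
have dK : is_diff (z, sigma) K (fun v => inner v.1 (c *: g1) + inner v.2 (16 *: g2)).
  have -> : K = (cst (eps ^+ 2) + (fun y => dual_norm Phi y ^+ 2) \o fst) ^+ 2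
              + 16 *: ((fun y => dual_norm Psi y ^+ 2) \o snd).
    by apply/funext => p; rewrite !fctE.
  by apply: is_diff_eq; apply/funext => v; rewrite !fctE /= !innerZr /covec /= add0r expr1.
have [-> ->] := partial_gradients_is_diff dK.
split; first exact: ex_diff.
rewrite !Phi_homo !Psi_homo !exprMn Phi_g1 Psi_g2 !ger0_norm ?mulr_ge0 ?addr_ge0 ?sqr_ge0 //.
by rewrite /K /c /=; field.
Qed.
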